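(* Fix integers $n,d,k,L\ge1$. Consider the normalized linear Transformer acting on $Z_l\in\mathbb{R}^{(d+k)\times n}$ by $$\hat Z_{l+1}=Z_l+W^V_l Z_l Z_l^\top (W^Q_l)^\top W^K_l Z_l+W^R_l Z_l,\qquad Z_{l+1}=\mathrm{normalize}(\hat Z_{l+1}),$$ with weights in $\mathbb{R}^{(d+k)\times(d+k)}$, where $\mathrm{normalize}$ replaces each row $j\in\{d+1,\dots,d+k\}$ of its argument by that row divided by its Euclidean norm (and leaves rows $1,\dots,d$ unchanged). Write $Z_l^\top=\begin{bmatrix}B_l, & \Phi_l\end{bmatrix}$ with $B_l\in\mathbb{R}^{n\times d}$, $\Phi_l\in\mathbb{R}^{n\times k}$, and initialize $B_0=B$, the incidence matrix of a graph, and $\Phi_0$ an arbitrary matrix of full column rank. Then there exists a choice of $W^V,W^Q,W^K,W^R$ such that every $k+1$ consecutive layers of the Transformer implement one iteration of subspace iteration for the Laplacian $\mathcal{L}=BB^\top$ (namely $\Phi\mapsto \mathrm{QR}(\mathcal{L}\Phi)$, where $\mathrm{QR}(M)$ is the $Q$ factor of a QR decomposition of $M$). Consequently, the output $\Phi_L$ of an $L$-layer Transformer approximates the top-$k$ eigenvectors of $\mathcal{L}$ to the same accuracy as $L/(k+1)$ steps of subspace iteration started from $\Phi_0$.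
   Context: A graph has $n$ vertices, $d$ edges and positive edge resistances $r_j$; graphs are connected. With an arbitrary edge orientation, the incidence matrix $B\in\mathbb{R}^{n\times d}$ has $B_{ij}=-1/\sqrt{r_j}$ if $e_j$ leaves vertex $i$, $+1/\sqrt{r_j}$ if it enters vertex $i$, and $0$ otherwise; $\mathcal{L}=BB^\top$. Subspace iteration (block power method): start from $\Phi_0\in\mathbb{R}^{n\times k}$ of full column rank and repeat $\hat\Phi_{i+1}=\mathcal{L}\Phi_i$, $\Phi_{i+1}=\mathrm{QR}(\hat\Phi_{i+1})$. *)

From mathcomp Require Import all_boot all_order all_algebra.
Set Implicit Arguments. Unset Strict Implicit. Unset Printing Implicit Defensive.
Import Order.TTheory GRing.Theory Num.Theory.
Local Open Scope ring_scope.

(* Incidence matrix B (n x d) of a graph with edge j oriented from src j to dst j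
   and resistance r j: B i j = -1/sqrt(r j) if e_j leaves i, +1/sqrt(r j) if it enters i. *)
Definition incidence (R : rcfType) (n d : nat) (src dst : 'I_d -> 'I_n)
  (r : 'I_d -> R) : 'M[R]_(n, d) :=
  \matrix_(i, j) (if i == src j then - (Num.sqrt (r j))^-1
                  else if i == dst j then (Num.sqrt (r j))^-1 else 0).

Definition adj (n d : nat) (src dst : 'I_d -> 'I_n) : rel 'I_n :=
  fun x y => [exists j, ((src j == x) && (dst j == y)) || ((src j == y) && (dst j == x))].

Definition graph_connected (n d : nat) (src dst : 'I_d -> 'I_n) : Prop :=
  forall u v : 'I_n, connect (adj src dst) u v.

Definition normalize (R : rcfType) (d k n : nat) (Z : 'M[R]_(d + k, n)) : 'M[R]_(d + k, n) :=
  col_mx (usubmx Z)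
    (\matrix_(i, j) (dsubmx Z i j / Num.sqrt (\sum_(m < n) dsubmx Z i m ^+ 2))).

Definition tf_layer (R : rcfType) (d k n : nat) (WV WQ WK WR : 'M[R]_(d + k))
  (Z : 'M[R]_(d + k, n)) : 'M[R]_(d + k, n) :=
  normalize (Z + WV *m Z *m Z^T *m WQ^T *m WK *m Z + WR *m Z).

Fixpoint tf_run (R : rcfType) (d k n : nat) (WV WQ WK WR : nat -> 'M[R]_(d + k))
  (Z0 : 'M[R]_(d + k, n)) (l : nat) : 'M[R]_(d + k, n) :=
  match l with
  | 0 => Z0
  | l'.+1 => tf_layer (WV l') (WQ l') (WK l') (WR l') (tf_run WV WQ WK WR Z0 l')
  end.

Definition Phi_of (R : rcfType) (d k n : nat) (Z : 'M[R]_(d + k, n)) : 'M[R]_(n, k) :=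
  (dsubmx Z)^T.

(* Q is the Q factor of a QR decomposition M = Q Rm of M (n x k): orthonormal
   columns and Rm upper triangular with positive diagonal (standard convention,
   making Q unique when M has full column rank). *)
Definition is_QR_Q (R : rcfType) (n k : nat) (M Q : 'M[R]_(n, k)) : Prop :=
  Q^T *m Q = 1%:M /\
  exists Rm : 'M[R]_k,
    [/\ forall i j : 'I_k, (j < i)%N -> Rm i j = 0,
        forall i : 'I_k, 0 < Rm i i
      & M = Q *m Rm].

(* W^Q = I, and the other weights are block diagonal with period k + 1 (columns
   indexed from 0).  The first layer of a period has W^V = diag(0, I), W^K = diag(I, 0)
   and W^R = diag(0, -I): the residual cancels the skip connection and the layer
   outputs the column-normalized L Phi = B B^T Phi.  Layer m + 1 has W^R = 0,
   W^K = diag(0, diag(1_{i<m})) and W^V = diag(0, -e_m e_m^T), so the attention term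
   subtracts from column m its Gram coefficients against columns 0..m-1, which are
   already orthonormal: this is classical Gram-Schmidt, one column per layer.  Every
   layer multiplies Phi on the right by the inverse of an upper triangular matrix with
   positive diagonal, so after k + 1 layers L Phi = Q S with Q^T Q = I and S upper
   triangular with positive diagonal. *)

From mathcomp Require Import all_boot all_order all_algebra.
Import Order.TTheory GRing.Theory Num.Theory.
Set Implicit Arguments. Unset Strict Implicit. Unset Printing Implicit Defensive.
Local Open Scope ring_scope.

Section UpperTriangular.
Variables (R : numDomainType) (k : nat).

Definition uptri_pos (S : 'M[R]_k) :=
  (forall i j : 'I_k, (j < i)%N -> S i j = 0) /\ (forall i, 0 < S i i).

Lemma uptri_posM (A B : 'M[R]_k) : uptri_pos A -> uptri_pos B -> uptri_pos (A *m B).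
Proof.
move=> [A0 Ap] [B0 Bp]; split=> [i j ji|i]; rewrite mxE.
  rewrite big1 // => c _; case: (ltnP c i) => ci; first by rewrite A0 ?mul0r.
  by rewrite B0 ?mulr0 // (leq_trans ji ci).
rewrite (bigD1 i) //= big1 ?addr0 ?mulr_gt0 // => c /negPf ci.
case: (ltnP c i) => hc; first by rewrite A0 ?mul0r.
by rewrite B0 ?mulr0 // ltn_neqAle hc andbT eq_sym val_eqE ci.
Qed.

Lemma uptri_pos_diag (c : 'rV[R]_k) : (forall i, 0 < c 0 i) -> uptri_pos (diag_mx c).
Proof.
move=> c_gt0; split=> [i j ji|i]; rewrite mxE; last by rewrite eqxx mulr1n.
by case: eqP ji => // ->; rewrite ltnn.
Qed.

Lemma uptri_pos_1D (N : 'M[R]_k) :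
  (forall i j : 'I_k, (j <= i)%N -> N i j = 0) -> uptri_pos (1%:M + N).
Proof.
move=> N0; split=> [i j ji|i]; rewrite !mxE N0 ?addr0 ?(ltnW ji) //.
  by case: eqP ji => // ->; rewrite ltnn.
by rewrite eqxx ltr01.
Qed.

End UpperTriangular.

Section ColumnNormalization.
Variables (R : rcfType) (n k : nat).
Implicit Types W M Q : 'M[R]_(n, k).

Definition col_norm W : 'rV[R]_k := \row_j Num.sqrt (\sum_i W i j ^+ 2).

Definition normc W : 'M[R]_(n, k) := \matrix_(i, j) (W i j / col_norm W 0 j).

Lemma col_norm_gt0 W j : (k <= \rank W)%N -> 0 < col_norm W 0 j.
Proof.
move=> rkW; rewrite mxE sqrtr_gt0 lt_def sumr_ge0 ?andbT => [|i _]; last exact: sqr_ge0.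
apply/eqP => /psumr_eq0P W0; have {}W0 i : W i j = 0.
  by apply/eqP; rewrite -sqrf_eq0 W0 // => l _; apply: sqr_ge0.
have freeWt : row_free W^T by rewrite /row_free mxrank_tr eqn_leq rank_leq_col.
have : delta_mx (0 : 'I_1) j *m W^T = 0 *m W^T.
  rewrite mul0mx -rowE; apply/matrixP => i i'; rewrite !mxE.
  by rewrite W0.
by move/(row_free_inj freeWt)/matrixP/(_ 0 j)/eqP; rewrite !mxE !eqxx oner_eq0.
Qed.

Lemma normcK W : (forall j, 0 < col_norm W 0 j) -> normc W *m diag_mx (col_norm W) = W.
Proof.
move=> W_gt0; rewrite mul_mx_diag; apply/matrixP => i j.
by rewrite mxE [normc W i j]mxE divfK ?gt_eqF ?W_gt0.
Qed.

Lemma normc_gram W a b :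
  ((normc W)^T *m normc W) a b = (W^T *m W) a b / (col_norm W 0 a * col_norm W 0 b).
Proof. by rewrite !mxE mulr_suml; apply: eq_bigr => i _; rewrite !mxE mulf_div. Qed.

Lemma normc_gram_diag W a : 0 < col_norm W 0 a -> ((normc W)^T *m normc W) a a = 1.
Proof.
move=> Wa_gt0; rewrite normc_gram -expr2.
have -> : (W^T *m W) a a = col_norm W 0 a ^+ 2.
  rewrite mxE [col_norm _ _ _]mxE sqr_sqrtr ?sumr_ge0 // => [|i _]; last exact: sqr_ge0.
  by apply: eq_bigr => i _; rewrite mxE expr2.
by rewrite divff // expf_neq0 // gt_eqF.
Qed.

End ColumnNormalization.

Section GramSchmidtProjection.
Variables (R : comPzRingType) (n k : nat).
Implicit Types Psi Q : 'M[R]_(n, k).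

Definition diag_below m : 'M[R]_k := diag_mx (\row_(i < k) (i < m)%N%:R).
Definition diag_at m : 'M[R]_k := diag_mx (\row_(i < k) (i == m :> nat)%:R).

Definition gs_proj m Psi : 'M[R]_k := diag_below m *m (Psi^T *m Psi) *m diag_at m.

Definition orthonormal_upto m Q :=
  forall a b : 'I_k, (a < m)%N -> (b < m)%N -> (Q^T *m Q) a b = (a == b)%:R.

Lemma gs_projE m Psi a b :
  gs_proj m Psi a b = if (a < m)%N && (b == m :> nat) then (Psi^T *m Psi) a b else 0.
Proof.
rewrite /gs_proj mul_mx_diag mul_diag_mx !mxE.
by case: (a < m)%N; case: (b == m :> nat); rewrite ?mul1r ?mulr1 ?mul0r ?mulr0.
Qed.

Lemma gs_proj_lower m Psi (i j : 'I_k) : (j <= i)%N -> gs_proj m Psi i j = 0.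
Proof.
move=> ji; rewrite gs_projE; case: andP => // -[im /eqP jm].
by move: (leq_ltn_trans ji im); rewrite jm ltnn.
Qed.

Lemma gs_proj_sq m Psi : gs_proj m Psi *m gs_proj m Psi = 0.
Proof.
apply/matrixP => a b; rewrite !mxE big1 // => c _.
rewrite !gs_projE; case: ifP => [/andP[_ /eqP ->]|]; last by rewrite mul0r.
by rewrite ltnn mulr0.
Qed.

Lemma gram_sym Q (a b : 'I_k) : (Q^T *m Q) a b = (Q^T *m Q) b a.
Proof. by rewrite !mxE; apply: eq_bigr => i _; rewrite !mxE mulrC. Qed.

Lemma gs_orthogonal m Psi (a b : 'I_k) : orthonormal_upto m Psi ->
  (a < m)%N -> (b <= m)%N -> a != b ->
  let W := Psi *m (1%:M - gs_proj m Psi) in (W^T *m W) a b = 0.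
Proof.
move=> orth am bm ab W; pose ea : 'rV[R]_k := delta_mx 0 a.
have eaNT : ea *m (gs_proj m Psi)^T = 0.
  rewrite -rowE; apply/rowP => c.
  by rewrite [LHS]mxE [LHS]mxE gs_projE (ltn_eqF am) andbF mxE.
set G := Psi^T *m Psi.
have eaWW : ea *m (W^T *m W) = ea *m G - ea *m G *m diag_below m *m G *m diag_at m.
  rewrite /W trmx_mul raddfB /= trmx1 !mulmxA [ea *m _]mulmxBr mulmx1 eaNT subr0.
  by rewrite -[_ *m Psi^T *m Psi]mulmxA -/G mulmxBr mulmx1 /gs_proj !mulmxA.
have {}orth (a' b' : 'I_k) : (a' < m)%N -> (b' < m)%N -> G a' b' = (a' == b')%:R := orth a' b'.
clearbody G.
have eaGD : ea *m G *m diag_below m = ea.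
  rewrite -mulmxA -rowE mul_mx_diag; apply/rowP => c; rewrite !mxE eqxx /= eq_sym.
  case: (ltnP c m) => cm; first by rewrite orth // mulr1.
  by rewrite mulr0; case: eqP cm => // <-; rewrite leqNgt am.
have -> : (W^T *m W) a b = (ea *m (W^T *m W)) 0 b by rewrite -rowE [RHS]mxE.
rewrite eaWW eaGD -rowE mul_mx_diag !mxE.
case: eqP => [_|bm']; first by rewrite mulr1 subrr.
by rewrite mulr0 subr0 orth ?(negPf ab) // ltn_neqAle bm andbT; apply/eqP.
Qed.

End GramSchmidtProjection.

Section GramSchmidtStep.
Variables (R : rcfType) (n k : nat).
Implicit Types M Psi Q : 'M[R]_(n, k).

Definition triangular_factor M Q := exists S : 'M[R]_k, uptri_pos S /\ M = Q *m S.

Lemma normc_triangular_factor M : (k <= \rank M)%N -> triangular_factor M (normc M).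
Proof.
move=> rkM; exists (diag_mx (col_norm M)); split.
  by apply: uptri_pos_diag => j; apply: col_norm_gt0.
by rewrite normcK // => j; apply: col_norm_gt0.
Qed.

Lemma gs_step m M Psi : (k <= \rank M)%N ->
  triangular_factor M Psi -> orthonormal_upto m Psi ->
  let Psi' := normc (Psi *m (1%:M - gs_proj m Psi)) in
  triangular_factor M Psi' /\ orthonormal_upto m.+1 Psi'.
Proof.
move=> rkM [S [S_ut M_def]] orth Psi'; set W := Psi *m (1%:M - gs_proj m Psi).
have PsiE : Psi = W *m (1%:M + gs_proj m Psi).
  by rewrite -mulmxA mulmxBl mul1mx [gs_proj m Psi *m _]mulmxDr mulmx1 gs_proj_sq addr0 addrK mulmx1.
have W_gt0 j : 0 < col_norm W 0 j.
  apply: col_norm_gt0; apply: leq_trans rkM _.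
  by rewrite M_def PsiE -mulmxA mxrankM_maxl.
split.
  exists (diag_mx (col_norm W) *m (1%:M + gs_proj m Psi) *m S); split.
    apply/uptri_posM/S_ut/uptri_posM; first exact: uptri_pos_diag.
    exact/uptri_pos_1D/gs_proj_lower.
  by rewrite !mulmxA normcK // -PsiE.
have W_orth (a b : 'I_k) : (a < m)%N -> (b <= m)%N -> a != b -> (Psi'^T *m Psi') a b = 0.
  by move=> am bm ab; rewrite normc_gram gs_orthogonal ?mul0r.
move=> a b; rewrite !ltnS => am bm; have [<-|ab] := eqVneq a b.
  by rewrite normc_gram_diag.
have [am'|ma] := ltnP a m; first exact: W_orth.
have bm' : (b < m)%N.
  rewrite ltn_neqAle bm andbT; apply: contra ab => /eqP bm'.
  by rewrite -val_eqE /= bm' eqn_leq am ma.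
by rewrite gram_sym W_orth // eq_sym.
Qed.

Lemma triangular_factor_QR M Q :
  triangular_factor M Q -> orthonormal_upto k Q -> is_QR_Q M Q.
Proof.
move=> [S [[S_tri S_gt0] M_def]] orth; split; last by exists S.
by apply/matrixP => a b; rewrite orth // mxE.
Qed.

End GramSchmidtStep.

Section BlockTransformer.
Variables (R : rcfType) (d k n : nat).

Lemma normalize_col_mx (X : 'M[R]_(d, n)) (Y : 'M[R]_(k, n)) :
  normalize (col_mx X Y) = col_mx X (normc Y^T)^T.
Proof.
rewrite /normalize col_mxKu col_mxKd; congr col_mx; apply/matrixP => i j.
by rewrite !mxE; congr (_ / Num.sqrt _); apply: eq_bigr => m _; rewrite mxE.
Qed.

Definition block_layer (X : 'M[R]_(d, n)) (V : 'M[R]_k) (K : 'M[R]_d) (P Rb : 'M[R]_k)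
    (Psi : 'M[R]_(n, k)) : 'M[R]_(n, k) :=
  normc (Psi + X^T *m K^T *m X *m Psi *m V^T
           + Psi *m P^T *m (Psi^T *m Psi) *m V^T + Psi *m Rb^T).

Lemma tf_layer_block X V K P Rb Psi :
  tf_layer (block_mx 0 0 0 V) 1%:M (block_mx K 0 0 P) (block_mx 0 0 0 Rb) (col_mx X Psi^T)
  = col_mx X (block_layer X V K P Rb Psi)^T.
Proof.
rewrite /tf_layer trmx1 mulmx1 !mul_block_col tr_col_mx mul_col_row mulmx_block.
rewrite mul_block_col !mul0mx !mulmx0 !add0r !addr0 !mul0mx !add0r !add_col_mx !addr0.
rewrite normalize_col_mx; congr (col_mx _ (normc _)^T).
by rewrite !linearD /= !trmx_mul !trmxK !mulmxA !addrA.
Qed.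

Variables (V : nat -> 'M[R]_k) (K : nat -> 'M[R]_d) (P Rb : nat -> 'M[R]_k).

Definition tf_run_block (X : 'M[R]_(d, n)) (Psi0 : 'M[R]_(n, k)) :=
  tf_run (fun l => block_mx 0 0 0 (V l)) (fun=> 1%:M) (fun l => block_mx (K l) 0 0 (P l))
    (fun l => block_mx 0 0 0 (Rb l)) (col_mx X Psi0^T).

Lemma tf_run_blockE X Psi0 l :
  tf_run_block X Psi0 l = col_mx X (Phi_of (tf_run_block X Psi0 l))^T.
Proof.
elim: l => [|l IH]; first by rewrite /Phi_of col_mxKd trmxK.
by rewrite /tf_run_block /= -/(tf_run_block X Psi0 l) IH tf_layer_block /Phi_of col_mxKd !trmxK.
Qed.

Lemma Phi_of_tf_run_block X Psi0 l :
  Phi_of (tf_run_block X Psi0 l.+1)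
  = block_layer X (V l) (K l) (P l) (Rb l) (Phi_of (tf_run_block X Psi0 l)).
Proof.
rewrite /tf_run_block /= -/(tf_run_block X Psi0 l) {1}tf_run_blockE tf_layer_block.
by rewrite {1}/Phi_of col_mxKd trmxK.
Qed.

End BlockTransformer.

Section LaplacianGramSchmidtWeights.
Variables (R : rcfType) (d k n : nat).

Definition lap_gs_V j : 'M[R]_k := if j is m.+1 then - diag_at R k m else 1%:M.
Definition lap_gs_K j : 'M[R]_d := if j is 0 then 1%:M else 0.
Definition lap_gs_P j : 'M[R]_k := if j is m.+1 then diag_below R k m else 0.
Definition lap_gs_R j : 'M[R]_k := if j is 0 then - 1%:M else 0.

Lemma block_layer_lap (X : 'M[R]_(d, n)) Psi :
  block_layer X (lap_gs_V 0) (lap_gs_K 0) (lap_gs_P 0) (lap_gs_R 0) Psi = normc (X^T *m X *m Psi).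
Proof.
rewrite /block_layer /= raddfN /= !trmx1 trmx0 mulmx0 mul0mx !mulmx1 addr0 mulmxN mulmx1.
by rewrite addrAC subrr add0r.
Qed.

Lemma block_layer_gs (X : 'M[R]_(d, n)) Psi m :
  block_layer X (lap_gs_V m.+1) (lap_gs_K m.+1) (lap_gs_P m.+1) (lap_gs_R m.+1) Psi
  = normc (Psi *m (1%:M - gs_proj m Psi)).
Proof.
rewrite /block_layer /= !trmx0 !mulmx0 !mul0mx !addr0 raddfN /= !tr_diag_mx mulmxN.
by rewrite /gs_proj mulmxBr mulmx1 !mulmxA.
Qed.

End LaplacianGramSchmidtWeights.

Unset Implicit Arguments.

Theorem lemma6 (R : rcfType) (n d k L : nat) :
  (1 <= n)%N -> (1 <= d)%N -> (1 <= k)%N -> (1 <= L)%N ->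
  exists WV WQ WK WR : nat -> 'M[R]_(d + k),
  forall (src dst : 'I_d -> 'I_n) (r : 'I_d -> R),
    (forall j, src j != dst j) ->
    (forall j, 0 < r j) ->
    graph_connected src dst ->
  forall Phi0 : 'M[R]_(n, k), \rank Phi0 = k ->
  let B := incidence src dst r in
  let Z := tf_run WV WQ WK WR (col_mx B^T Phi0^T) in
  forall t : nat, (t.+1 * k.+1 <= L)%N ->
    \rank (B *m B^T *m Phi_of (Z (t * k.+1)%N)) = k ->
    is_QR_Q (B *m B^T *m Phi_of (Z (t * k.+1)%N)) (Phi_of (Z (t.+1 * k.+1)%N)).
Proof.
move=> _ _ _ _; pose j l := (l %% k.+1)%N.
exists (fun l => block_mx 0 0 0 (lap_gs_V R k (j l))), (fun=> 1%:M),
  (fun l => block_mx (lap_gs_K R d (j l)) 0 0 (lap_gs_P R k (j l))),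
  (fun l => block_mx 0 0 0 (lap_gs_R R k (j l))).
move=> src dst r _ _ _ Phi0 _ B Z t _; set M := _ *m _ => rkM.
pose phi l := Phi_of (Z l).
have phiS l : phi l.+1 = block_layer B^T (lap_gs_V R k (j l)) (lap_gs_K R d (j l))
    (lap_gs_P R k (j l)) (lap_gs_R R k (j l)) (phi l).
  exact: Phi_of_tf_run_block.
have invariant m : (m <= k)%N ->
    triangular_factor M (phi (t * k.+1 + m).+1) /\ orthonormal_upto m (phi (t * k.+1 + m).+1).
  elim: m => [_|m IH mk].
    rewrite addn0 phiS /j modnMl block_layer_lap trmxK.
    by split=> [|a b //]; apply: normc_triangular_factor; rewrite rkM.
  have [fac orth] := IH (ltnW mk).
  have jS : j (t * k.+1 + m).+1 = m.+1 by rewrite /j -addnS modnMDl modn_small.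
  by rewrite addnS phiS jS block_layer_gs; apply: gs_step; rewrite ?rkM.
have [fac orth] := invariant k (leqnn k).
by rewrite mulSnr addnS; apply: triangular_factor_QR.
Qed.
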